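(* For every $n\ge1$, the elements $z_{2k}$, $k=0,\dots,\lfloor\frac{n-1}{2}\rfloor$, together with the elementary symmetric polynomials $\sigma_{2k}$, $k=1,\dots,\lfloor\frac n2\rfloor$, form an algebraically independent set of generators of the ring $\mathbb C[x_1,\dots,x_n]^{S_n}$ of symmetric polynomials.
   Context: $U(\mathfrak h_n)$ is the associative superalgebra generated by odd elements $\xi_1,\dots,\xi_n$ with $\xi_i\xi_j+\xi_j\xi_i=0$ for $i\neq j$; $x_i=\xi_i^2$ are central. Let $T$ be the $\mathbb C[x_1,\dots,x_n]$-linear endomorphism of the free $\mathbb C[x_1,\dots,x_n]$-module with basis $\xi_1,\dots,\xi_n$ given by $T(\xi_j)=\sum_i t_{ij}\xi_i$ with $t_{ii}=0$, $t_{ij}=x_j$ for $i<j$, $t_{ij}=-x_j$ for $i>j$. Put $\phi_0=\sum_i\xi_i$, $\phi_k=T^k(\phi_0)$, and $z_{2k}=\frac12(\phi_0\phi_{2k}+\phi_{2k}\phi_0)\in\mathbb C[x_1,\dots,x_n]$. $\sigma_p$ denotes the $p$-th elementary symmetric polynomial in $x_1,\dots,x_n$. *)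

From mathcomp Require Import all_boot all_algebra.
From mathcomp Require Import Rstruct.
From mathcomp Require Import complex.
From mathcomp Require Import mpoly.
Set Implicit Arguments. Unset Strict Implicit. Unset Printing Implicit Defensive.
Import GRing.Theory.
Local Open Scope ring_scope.

Definition Cplx : numClosedFieldType := complex Rdefinitions.R.

Section Hn.
Variable n : nat.

(* Elements of the free C[x_1..x_n]-module with basis xi_1..xi_n
   (the odd part of degree 1 in U(h_n)) are represented by their
   coordinate column vectors: v represents  \sum_i v i 0 * xi_i. *)
Definition Pol := {mpoly Cplx[n]}.
Definition oddvec := 'cV[Pol]_n.

(* The matrix of T : T(xi_j) = \sum_i t_ij xi_i, with
   t_ii = 0, t_ij = x_j (i<j), t_ij = -x_j (i>j). *)
Definition Tmx : 'M[Pol]_n :=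
  \matrix_(i < n, j < n)
    (if (i < j)%N then 'X_j else if (j < i)%N then - 'X_j else 0).

Definition phi0 : oddvec := \col_(i < n) 1.
Definition phi (k : nat) : oddvec := iter k (mulmx Tmx) phi0.

(* Half-anticommutator (1/2)(u v + v u) in U(h_n) of two elements
   u = \sum_i a_i xi_i, v = \sum_i b_i xi_i with central polynomial
   coefficients. Since xi_i xi_j + xi_j xi_i = 0 (i <> j) and
   xi_i^2 = x_i, this equals \sum_i a_i b_i x_i, an element of
   C[x_1..x_n]. *)
Definition half_anticomm (u v : oddvec) : Pol :=
  \sum_(i < n) u i 0 * v i 0 * 'X_i.

Definition z (k2 : nat) : Pol := half_anticomm phi0 (phi k2) .

Definition sigma (p : nat) : Pol := mesym n Cplx p.

Definition gens : seq Pol :=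
  [seq z (2 * k) | k <- iota 0 ((n.-1)./2).+1] ++
  [seq sigma (2 * k) | k <- iota 1 (n./2)].

Definition subst_hom (m : nat) (s : m.-tuple Pol) (p : {mpoly Cplx[m]}) : Pol :=
  p \mPo s.

Definition alg_indep (m : nat) (s : m.-tuple Pol) : Prop :=
  forall p : {mpoly Cplx[m]}, subst_hom s p = 0 -> p = 0.

Definition generates_symmetric (m : nat) (s : m.-tuple Pol) : Prop :=
  (forall i : 'I_m, tnth s i \is symmetric) /\
  (forall q : Pol, q \is symmetric -> exists p : {mpoly Cplx[m]}, q = subst_hom s p).

End Hn.

From mathcomp Require Import all_boot all_algebra.
From mathcomp Require Import mpoly.
From mathcomp Require Import ring zify.
Set Implicit Arguments. Unset Strict Implicit. Unset Printing Implicit Defensive.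
Import GRing.Theory Num.Theory.
Local Open Scope ring_scope.

(* Put F_i(t) = \prod_(j < i) (1 - x_j t) * \prod_(i <= j < n) (1 + x_j t), so that
   F_0 = \sum_p sigma_p t^p and F_n(t) = F_0(-t), and W_i = F_i / (1 + x_i t).
   Since F_i - F_(i+1) = 2 x_i t W_i, telescoping gives (1 - tT) W = E(t) phi_0
   and t \sum_i x_i W_i = O(t), where E and O are the even and odd parts of F_0.
   Hence O(t) = t E(t) \sum_k z_k t^k, i.e.
   sigma_(2k+1) = \sum_(j <= k) sigma_(2j) z_(2k-2j).
   This triangular relation expresses sigma_1, ..., sigma_n polynomially in the
   proposed generators and conversely; by the uniqueness part of the fundamental
   theorem on symmetric polynomials the two substitutions are mutually inverse. *)

Lemma coef_prod_1CX (R : comNzRingType) (I : finType) (c : I -> R) k :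
  (\prod_(j : I) (1 + (c j)%:P * 'X))`_k =
  \sum_(J : {set I} | #|J| == k) \prod_(j in J) c j.
Proof.
under eq_bigr => j _ do rewrite addrC.
rewrite bigA_distr coef_sum [RHS]big_mkcond /=; apply: eq_bigr => J _.
rewrite -big_mkcond /= big_split /= prodr_const -rmorph_prod coefCM coefXn.
by rewrite eq_sym; case: eqP; rewrite ?mulr1 ?mulr0.
Qed.

Lemma telescope_sum_ord (V : zmodType) (f : nat -> V) (n a b : nat) :
  (a <= b <= n)%N -> \sum_(j < n | (a <= j < b)%N) (f j - f j.+1) = f a - f b.
Proof.
case/andP=> le_ab le_bn.
have -> : \sum_(j < n | (a <= j < b)%N) (f j - f j.+1) = \sum_(a <= j < b) (f j - f j.+1).
  by rewrite (big_nat_widen _ _ _ _ _ le_bn) big_geq_mkord; apply: eq_bigl => j; rewrite andbC.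
by rewrite -opprB -telescope_sumr // -sumrN; apply: eq_bigr => j _; rewrite opprB.
Qed.

Lemma sum_ord_even (V : nmodType) (k : nat) (f : nat -> V) :
  \sum_(j < (2 * k).+1) (if odd j then 0 else f j) = \sum_(j < k.+1) f (2 * j)%N.
Proof.
elim: k => [|k IH]; first by rewrite !big_ord1.
rewrite mulnS !addSn add0n big_ord_recr big_ord_recr /= IH.
by rewrite oddM /= addr0 [RHS]big_ord_recr mulnS.
Qed.

Lemma pmulrnI_lmod (F : numFieldType) (V : lmodType F) (k : nat) :
  (0 < k)%N -> injective (fun v : V => v *+ k).
Proof.
move=> k_gt0 u v; rewrite /= -!scaler_nat; apply: scalerI.
by rewrite pnatr_eq0 -lt0n.
Qed.

Lemma conv_inj (R : pzRingType) (a u v : nat -> R) (N : nat) :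
  a 0 = 1 ->
  (forall k, (k <= N)%N ->
     \sum_(j < k.+1) a j * u (k - j)%N = \sum_(j < k.+1) a j * v (k - j)%N) ->
  forall k, (k <= N)%N -> u k = v k.
Proof.
move=> a0 conv; elim/ltn_ind=> k IH le_kN.
have tail_eq : \sum_(j < k) a (lift ord0 j) * u (k - lift ord0 j)%N
             = \sum_(j < k) a (lift ord0 j) * v (k - lift ord0 j)%N.
  by apply: eq_bigr => j _; rewrite IH // lift0; move: (ltn_ord j) le_kN; lia.
by move: (conv k le_kN); rewrite !big_ord_recl a0 !mul1r subn0 tail_eq => /addIr.
Qed.

Section SkewGeneratingFunction.
Variables (R : comNzRingType) (n : nat) (x : 'I_n -> R).

Definition skew_mx : 'M[R]_n :=
  \matrix_(i, j) (if (i < j)%N then x j else if (j < i)%N then - x j else 0).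
Definition skew_iter (k : nat) : 'cV[R]_n := iter k (mulmx skew_mx) (\col_(i < n) 1).
Definition skew_z (k : nat) : R := \sum_(i < n) skew_iter k i 0 * x i.

Definition sgx (i : nat) (j : 'I_n) : R := if (j < i)%N then - x j else x j.
Definition Fpoly (i : nat) : {poly R} := \prod_(j < n) (1 + (sgx i j)%:P * 'X).
Definition Wpoly (i : 'I_n) : {poly R} := \prod_(j < n | j != i) (1 + (sgx i j)%:P * 'X).

Lemma FpolyE (i : 'I_n) : Fpoly i = (1 + (x i)%:P * 'X) * Wpoly i.
Proof. by rewrite /Fpoly (bigD1 i) //= /sgx ltnn. Qed.

Lemma FpolySE (i : 'I_n) : Fpoly i.+1 = (1 - (x i)%:P * 'X) * Wpoly i.
Proof.
rewrite /Fpoly (bigD1 i) //= {1}/sgx ltnSn polyCN mulNr; congr (_ * _).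
by apply: eq_bigr => j ji; rewrite /sgx ltnS leq_eqVlt val_eqE (negbTE ji).
Qed.

Lemma Fpoly_subS (i : 'I_n) : Fpoly i - Fpoly i.+1 = ((x i)%:P * 'X * Wpoly i) *+ 2.
Proof. by rewrite FpolySE FpolyE; ring. Qed.

Lemma Fpoly_addS (i : 'I_n) : Fpoly i + Fpoly i.+1 = Wpoly i *+ 2.
Proof. by rewrite FpolySE FpolyE; ring. Qed.

Lemma sum_Wpoly : (\sum_(j < n) (x j)%:P * 'X * Wpoly j) *+ 2 = Fpoly 0 - Fpoly n.
Proof.
rewrite -sumrMnl -(@telescope_sum_ord _ _ n) ?leqnn //.
by apply: eq_big => [j|j _]; rewrite ?ltn_ord ?Fpoly_subS.
Qed.

Lemma Wpoly_rec (i : 'I_n) :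
  (Wpoly i - 'X * \sum_(j < n) (skew_mx i j)%:P * Wpoly j) *+ 2 = Fpoly 0 + Fpoly n.
Proof.
pose D j := Fpoly j - Fpoly j.+1.
have termE (j : 'I_n) : ('X * ((skew_mx i j)%:P * Wpoly j)) *+ 2 =
    (if (i < j < n)%N then D j else 0) - (if (0 <= j < i)%N then D j else 0).
  rewrite /D Fpoly_subS mxE ltn_ord leq0n andbT /=.
  by case: ltngtP => _; rewrite ?polyCN ?polyC0; ring.
rewrite mulrnBl mulr_sumr -sumrMnl (eq_bigr _ (fun j _ => termE j)) sumrB.
rewrite -!big_mkcond !telescope_sum_ord ?leq0n ?leqnn ?ltn_ord ?(ltnW (ltn_ord i)) //.
by rewrite -Fpoly_addS; ring.
Qed.

Definition Wcoef (k : nat) : 'cV[R]_n := \col_(i < n) ((Wpoly i)`_k *+ 2).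

Lemma Wcoef0 : Wcoef 0 = (Fpoly 0 + Fpoly n)`_0 *: skew_iter 0.
Proof.
apply/matrixP => i j; rewrite ord1 !mxE -(Wpoly_rec i) coefMn coefB coefXM.
by rewrite subr0 mulr1.
Qed.

Lemma WcoefS k :
  Wcoef k.+1 = skew_mx *m Wcoef k + (Fpoly 0 + Fpoly n)`_k.+1 *: skew_iter 0.
Proof.
apply/matrixP => i j; rewrite ord1 !mxE -(Wpoly_rec i) coefMn coefB coefXM /=.
rewrite coef_sum mulr1 mulrnBl -sumrMnl.
have -> : \sum_(l < n) ((skew_mx i l)%:P * Wpoly l)`_k *+ 2
    = \sum_(l < n) skew_mx i l * Wcoef k l 0.
  by apply: eq_bigr => l _; rewrite !mxE coefCM mulrnAr.
by rewrite addrC subrK.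
Qed.

Lemma WcoefE k : Wcoef k = \sum_(j < k.+1) (Fpoly 0 + Fpoly n)`_j *: skew_iter (k - j).
Proof.
elim: k => [|k IH]; first by rewrite Wcoef0 big_ord1.
rewrite WcoefS IH [RHS]big_ord_recr /= subnn mulmx_sumr; congr (_ + _).
by apply: eq_bigr => j _; rewrite -scalemxAr subSn ?leq_ord.
Qed.

Lemma skew_z_conv k :
  \sum_(j < k.+1) (Fpoly 0 + Fpoly n)`_j * skew_z (k - j) = (Fpoly 0 - Fpoly n)`_k.+1.
Proof.
rewrite -sum_Wpoly coefMn coef_sum -sumrMnl.
have -> : \sum_(j < k.+1) (Fpoly 0 + Fpoly n)`_j * skew_z (k - j)
    = \sum_(i < n) Wcoef k i 0 * x i.
  rewrite WcoefE; under [RHS]eq_bigr => i _ do rewrite summxE mulr_suml.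
  rewrite exchange_big /=; apply: eq_bigr => j _.
  by rewrite /skew_z mulr_sumr; apply: eq_bigr => i _; rewrite mxE mulrA.
by apply: eq_bigr => i _; rewrite -mulrA coefCM coefXM /= !mxE mulrnAl mulrC.
Qed.

End SkewGeneratingFunction.

Section ZRecursion.
Variable n : nat.
Local Notation xs := (fun j : 'I_n => 'X_j : {mpoly Cplx[n]}).

Lemma z_skew_z k : z n k = skew_z xs k.
Proof. by apply: eq_bigr => i _; rewrite mxE mul1r. Qed.

Lemma coef_Fpoly0 k : (Fpoly xs 0)`_k = sigma n k.
Proof. exact: coef_prod_1CX. Qed.

Lemma coef_Fpolyn k : (Fpoly xs n)`_k = (-1) ^+ k * sigma n k.
Proof.
rewrite coef_prod_1CX /sigma /mesym mulr_sumr; apply: eq_bigr => J /eqP <-.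
by rewrite -prodrN; apply: eq_bigr => j _; rewrite /sgx ltn_ord.
Qed.

Lemma z_rec_even k :
  \sum_(j < k.+1) sigma n (2 * j) * z n (2 * (k - j)) = sigma n (2 * k).+1.
Proof.
(* The occurrence patterns matter: matching coef_Fpoly0 against the Fpoly xs n summand
   makes the unifier unfold both products. *)
have coef_even j : (Fpoly xs 0 + Fpoly xs n)`_j = (if odd j then 0 else sigma n j) *+ 2.
  rewrite coefD [X in X + _]coef_Fpoly0 [X in _ + X]coef_Fpolyn -signr_odd.
  by case: odd; rewrite ?expr1 ?expr0 ?mulN1r ?mul1r ?addrN ?mul0rn // mulr2n.
have coef_odd : (Fpoly xs 0 - Fpoly xs n)`_(2 * k).+1 = sigma n (2 * k).+1 *+ 2.
  rewrite coefB [X in X - _]coef_Fpoly0 [X in _ - X]coef_Fpolyn -signr_odd /= oddM /=.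
  by rewrite mulN1r opprK mulr2n.
suff : (\sum_(j < k.+1) sigma n (2 * j) * z n (2 * (k - j))) *+ 2 = sigma n (2 * k).+1 *+ 2.
  exact: pmulrnI_lmod.
rewrite -coef_odd -skew_z_conv.
rewrite [RHS](eq_bigr (fun j : 'I__ => (if odd j then 0 else sigma n j * z n (2 * k - j)) *+ 2)).
  rewrite sumrMnl (sum_ord_even _ (fun i => sigma n i * z n (2 * k - i))).
  by apply: (congr1 (fun s => s *+ 2)); apply: eq_bigr => j _; rewrite mulnBr.
by move=> j _; rewrite coef_even z_skew_z; case: odd; rewrite ?mul0rn ?mul0r // mulrnAl.
Qed.

Lemma z_even_sym k : z n (2 * k) \is symmetric.
Proof.
elim/ltn_ind: k => k IH.
have := z_rec_even k; rewrite big_ord_recl muln0 /sigma mesym0E mul1r subn0.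
move=> /(canRL (addrK _)) ->; apply: rpredB; first exact: mesym_sym.
apply: rpred_sum => j _; apply: rpredM; first exact: mesym_sym.
by apply: IH; move: (ltn_ord j); rewrite lift0; lia.
Qed.

End ZRecursion.

Lemma comp_mpolyA (R : comNzRingType) (k l m : nat) (p : {mpoly R[k]})
    (lq : k.-tuple {mpoly R[l]}) (lr : l.-tuple {mpoly R[m]}) :
  (p \mPo lq) \mPo lr = p \mPo [tuple tnth lq i \mPo lr | i < k].
Proof.
rewrite [p \mPo lq]comp_mpolyEX [p \mPo _]comp_mpolyEX raddf_sum /=.
apply: eq_bigr => mm _; rewrite comp_mpolyZ; congr (_ *: _).
rewrite !comp_mpolyX rmorph_prod /=; apply: eq_bigr => i _.
by rewrite rmorphXn tnth_mktuple.
Qed.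

Definition varn {R : nzRingType} (m i : nat) : {mpoly R[m]} :=
  if insub i is Some j then 'X_j else 0.

Lemma varn_ord (R : nzRingType) m (i : 'I_m) : varn m i = 'X_i :> {mpoly R[m]}.
Proof. by rewrite /varn valK. Qed.

Lemma comp_varn (R : comNzRingType) k m i (t : m.-tuple {mpoly R[k]}) :
  varn m i \mPo t = t`_i.
Proof.
rewrite /varn; case: insubP => [j _ <-|]; first exact: comp_mpolyXU.
by rewrite -leqNgt => le_mi; rewrite comp_mpoly0 nth_default ?size_tuple.
Qed.

Section ElementarySymmetric.
Variable n : nat.

Definition sigmas : n.-tuple {mpoly Cplx[n]} := [tuple mesym n Cplx i.+1 | i < n].

Lemma comp_sigmas_inj : injective (comp_mpoly sigmas).
Proof. exact: msym_fundamental_un. Qed.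

Lemma symf_comp t : symf (t \mPo sigmas) = t.
Proof.
apply: comp_sigmas_inj; rewrite -symfP //; apply: mcomp_sym => i.
by rewrite -tnth_nth tnth_mktuple mesym_sym.
Qed.

(* In {mpoly Cplx[n]} the variable y_d stands for sigma_(d+1). *)
Definition sigma_y (d : nat) : {mpoly Cplx[n]} := if d is d'.+1 then varn n d' else 1.

Lemma comp_sigma_y d : sigma_y d \mPo sigmas = sigma n d.
Proof.
case: d => [|d]; first by rewrite comp_mpoly1 /sigma mesym0E.
rewrite /= comp_varn; case: (ltnP d n) => [lt_dn|le_nd].
  by rewrite -[d]/(nat_of_ord (Ordinal lt_dn)) nth_mktuple.
by rewrite nth_default ?size_tuple // /sigma mesym_geqnE.
Qed.

Lemma symf_sigma d : symf (sigma n d) = sigma_y d.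
Proof. by rewrite -comp_sigma_y symf_comp. Qed.

Lemma symf_z_rec k :
  \sum_(j < k.+1) sigma_y (2 * j) * symf (z n (2 * (k - j))) = sigma_y (2 * k).+1.
Proof.
apply: comp_sigmas_inj; rewrite rmorph_sum comp_sigma_y -z_rec_even.
by apply: eq_bigr => j _; rewrite rmorphM /= comp_sigma_y -symfP ?z_even_sym.
Qed.

End ElementarySymmetric.

Section Generators.
Variable n : nat.
Local Notation K := (n.-1)./2.
Local Notation L := n./2.
Local Notation m := (size (gens n)).
Local Notation gT := (in_tuple (gens n)).

Lemma size_gens : (0 < n)%N -> m = n.
Proof. by rewrite size_cat !size_map !size_iota -!divn2; lia. Qed.

Lemma nth_gens_z i : (i <= K)%N -> (gens n)`_i = z n (2 * i).
Proof.
move=> le_iK; rewrite nth_cat size_map size_iota ltnS le_iK.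
by rewrite (nth_map 0%N) ?nth_iota ?size_iota.
Qed.

Lemma nth_gens_sigma l : (0 < l <= L)%N -> (gens n)`_(K + l) = sigma n (2 * l).
Proof.
move=> l_range; rewrite nth_cat size_map size_iota.
have -> : (K + l < K.+1)%N = false by lia.
rewrite (nth_map 0%N) ?nth_iota ?size_iota; try lia.
by congr (sigma n _); lia.
Qed.

Lemma gens_sym q : q \in gens n -> q \is symmetric.
Proof. by rewrite mem_cat => /orP[]/mapP[k _ ->]; [exact: z_even_sym | exact: mesym_sym]. Qed.

(* In {mpoly Cplx[m]} the variable w_k stands for the k-th generator, i.e.
   z_(2k) for k <= K and sigma_(2l) for k = K + l; sigma_w d is then the
   expression of sigma_d given by the recursion z_rec_even. *)
Definition sigma_w_even (j : nat) : {mpoly Cplx[m]} := if j is 0 then 1 else varn m (K + j).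
Definition sigma_w_odd (k : nat) : {mpoly Cplx[m]} :=
  \sum_(j < k.+1) sigma_w_even j * varn m (k - j).
Definition sigma_w (d : nat) : {mpoly Cplx[m]} :=
  if odd d then sigma_w_odd d./2 else sigma_w_even d./2.
Definition sigma_ws : n.-tuple {mpoly Cplx[m]} := [tuple sigma_w i.+1 | i < n].
Definition gens_y : m.-tuple {mpoly Cplx[n]} := [tuple symf (tnth gT i) | i < m].

Lemma sigma_w_double j : sigma_w (2 * j) = sigma_w_even j.
Proof. by rewrite /sigma_w mul2n odd_double doubleK. Qed.

Lemma sigma_w_doubleS k : sigma_w (2 * k).+1 = sigma_w_odd k.
Proof. by rewrite /sigma_w mul2n /= odd_double uphalf_double. Qed.

Lemma comp_varn_gens k : (k <= K)%N -> varn m k \mPo gT = z n (2 * k).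
Proof. by move=> le_kK; rewrite comp_varn in_tupleE nth_gens_z. Qed.

Lemma comp_sigma_w_even j : (j <= L)%N -> sigma_w_even j \mPo gT = sigma n (2 * j).
Proof.
case: j => [|j] le_jL; first by rewrite comp_mpoly1 /sigma mesym0E.
by rewrite comp_varn in_tupleE nth_gens_sigma.
Qed.

Lemma comp_sigma_w_odd k : (2 * k < n)%N -> sigma_w_odd k \mPo gT = sigma n (2 * k).+1.
Proof.
move=> lt_2k_n; rewrite -z_rec_even rmorph_sum; apply: eq_bigr => j _.
rewrite rmorphM /= comp_sigma_w_even ?comp_varn_gens //;
  by move: (ltn_ord j) lt_2k_n; rewrite -!divn2; lia.
Qed.

Lemma comp_sigma_w d : (d <= n)%N -> sigma_w d \mPo gT = sigma n d.
Proof.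
move=> le_dn; case/boolP: (odd d) => odd_d.
  have d_eq : d = (2 * d./2).+1%N by rewrite -[LHS]odd_double_half odd_d mul2n.
  by rewrite d_eq sigma_w_doubleS comp_sigma_w_odd // -d_eq.
have d_eq : d = (2 * d./2)%N by rewrite -[LHS]odd_double_half (negbTE odd_d) mul2n.
by rewrite d_eq sigma_w_double comp_sigma_w_even // half_leq.
Qed.

Lemma comp_sigma_ws : [tuple tnth sigma_ws i \mPo gT | i < n] = sigmas n.
Proof. by apply: eq_from_tnth => i; rewrite !tnth_mktuple comp_sigma_w. Qed.

Lemma sigma_y_ws d : (d <= n)%N -> sigma_y n d \mPo sigma_ws = sigma_w d.
Proof.
case: d => [|d] le_dn; first by rewrite comp_mpoly1.
by rewrite /= comp_varn -[d]/(nat_of_ord (Ordinal le_dn)) nth_mktuple.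
Qed.

Lemma symf_z_ws k : (0 < n)%N -> (k <= K)%N -> symf (z n (2 * k)) \mPo sigma_ws = varn m k.
Proof.
move=> n_gt0.
apply: (@conv_inj _ sigma_w_even (fun k => symf (z n (2 * k)) \mPo sigma_ws) (varn m) K)
  => // {}k le_kK.
have le_2k_n : ((2 * k).+1 <= n)%N by move: le_kK n_gt0; rewrite -!divn2; lia.
rewrite -[RHS]/(sigma_w_odd k) -sigma_w_doubleS -sigma_y_ws // -symf_z_rec rmorph_sum /=.
apply: eq_bigr => j _; rewrite rmorphM /= sigma_y_ws ?sigma_w_double //.
by move: (ltn_ord j) le_2k_n; lia.
Qed.

Lemma comp_gens_y : [tuple tnth gens_y i \mPo sigmas n | i < m] = gT.
Proof.
apply: eq_from_tnth => i; rewrite !tnth_mktuple -symfP //.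
exact/gens_sym/mem_tnth.
Qed.

Lemma comp_gens_y_ws : (0 < n)%N ->
  [tuple tnth gens_y i \mPo sigma_ws | i < m] = [tuple 'X_i | i < m].
Proof.
move=> n_gt0; apply: eq_from_tnth => i; rewrite !tnth_mktuple (tnth_nth 0) /= -varn_ord.
case: (leqP i K) => [le_iK | lt_Ki]; first by rewrite nth_gens_z // symf_z_ws.
have [l -> l_range] : exists2 l, (i : nat) = (K + l)%N & (0 < l <= L)%N.
  have lt_in := leq_trans (ltn_ord i) (eq_leq (size_gens n_gt0)).
  by exists (i - K)%N; move: lt_Ki lt_in; rewrite -!divn2; lia.
rewrite nth_gens_sigma // symf_sigma sigma_y_ws ?sigma_w_double; last lia.
by case: l l_range.
Qed.

End Generators.

Theorem corollary5p6 (n : nat) (hn : (1 <= n)%N) :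
  size (gens n) = n /\
  alg_indep (in_tuple (gens n)) /\ generates_symmetric (in_tuple (gens n)).
Proof.
split; first exact: size_gens.
split.
  move=> p; rewrite /subst_hom => p_gens0.
  have p_y0 : p \mPo gens_y n = 0.
    by apply: msym_fundamental_un0; rewrite comp_mpolyA comp_gens_y.
  by rewrite -[p]comp_mpoly_id -(comp_gens_y_ws hn) -comp_mpolyA p_y0 comp_mpoly0.
split=> [i|q q_sym]; first exact/gens_sym/mem_tnth.
exists (symf q \mPo sigma_ws n).
by rewrite /subst_hom comp_mpolyA comp_sigma_ws; exact: symfP.
Qed.
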